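(* In the algorithm described in the context, for each agent $i$ and each round $r$, when $N$ is sufficiently large such that $N\ge4\ln N$, the number $V_i^r$ of perturbed adoption vectors sampled by agent $i$ in round $r$ satisfies $$\frac{3(1-\beta)}{32}hg(N)\le V_i^r\le\frac{15}{8}hg(N)$$ with probability at least $1-\frac{6M+3}{N^{10}}$.
   Context: Setting. $\mathcal G=(\mathcal N,\mathcal E)$ is a connected, non-bipartite undirected graph on agents $\mathcal N=\{1,\dots,N\}$; $\mathcal N_i$ is the neighbor set of $i$, $N_i=|\mathcal N_i|$. There are $M$ options; quality signals $\Phi_j^r\in\{0,1\}$ are i.i.d. Bernoulli$(\eta_j)$ over rounds $r$. $X^r_{i,j}\in\{0,1\}$ indicates agent $i$ adopts option $j$ in round $r$ ($\sum_jX^r_{i,j}\le1$); $D^r_j=\sum_iX^r_{i,j}$, $D^r=\sum_jD^r_j$, $Q^r_j=D^r_j/D^r$, $Q^0_j=1/M$. The function $g:\mathbb N^+\to\mathbb R$ satisfies: for every $\ell>0$, $g(N)>\ell\ln N$ and $g(N)<\ell N$ for all sufficiently large $N$. Parameters: $\varepsilon>0$, $\mu\in(0,1)$, $\beta\in(1/2,1)$, $\sigma\ge11$, $h=16\sigma/(1-\beta)$. Metropolis–Hastings random walk: from $i$ move to $i'\in\mathcal N_i$ with probability $\min\{1/N_i,1/N_{i'}\}$, else stay; walk length $L=O(\log N)$ chosen so that the endpoint is at each agent with probability in $[\frac1N-\frac1{N^3},\frac1N+\frac1{N^3}]$. Round $r$: (1) an agent that adopted an option in round $r-1$ perturbs each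 coordinate of its adoption vector independently (keep with probability $\frac{e^{\varepsilon/2}}{e^{\varepsilon/2}+1}$, flip otherwise); (2) each such agent launches $hg(N)$ independent random-walk tokens of length $L$ carrying its perturbed vector (forwarded via per-agent FIFO queues, up to $hg(N)$ tokens per agent per slot); a token is sampled by the agent where it ends; $V^r_i$ is the number of tokens sampled by $i$; (3) with $\Lambda^r_{i,j}$ the fraction of sampled vectors with $j$-th coordinate $1$, $\widetilde Q^r_{i,j}=\max\{\frac{e^{\varepsilon/2}+1}{e^{\varepsilon/2}-1}\Lambda^r_{i,j}-\frac1{e^{\varepsilon/2}-1},0\}$, $\widehat Q^r_{i,j}=\widetilde Q^r_{i,j}/\sum_{j'}\widetilde Q^r_{i,j'}$, and $i$ selects option $j$ with probability $(1-\mu)\widehat Q^r_{i,j}+\mu/M$; (4) having selected $j^*$, $i$ adopts it with probability $\beta$ if $\Phi^r_{j^*}=1$, $1-\beta$ if $\Phi^r_{j^*}=0$, else adopts nothing. *)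

From HB Require Import structures.
From mathcomp Require Import all_boot all_order all_algebra.
From mathcomp Require Import reals sequences exp.
Set Implicit Arguments.
Unset Strict Implicit.
Unset Printing Implicit Defensive.
Import Order.TTheory GRing.Theory Num.Theory.
Local Open Scope ring_scope.

(* Graph: agents are 'I_N, the undirected graph is a symmetric,        *)
(* irreflexive relation adj.                                           *)

Definition graph_connected (N : nat) (adj : rel 'I_N) : Prop :=
  forall u v : 'I_N, connect adj u v.

Definition bipartite (N : nat) (adj : rel 'I_N) : Prop :=
  exists f : 'I_N -> bool, forall u v, adj u v -> f u != f v.

Definition deg (N : nat) (adj : rel 'I_N) (u : 'I_N) : nat := #|[set v | adj u v]|.

Definition mh_step (R : realType) (N : nat) (adj : rel 'I_N) (u v : 'I_N) : R :=
  if u == v then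
    1 - \sum_(w | adj u w) Num.min ((deg adj u)%:R^-1) ((deg adj w)%:R^-1)
  else if adj u v then Num.min ((deg adj u)%:R^-1) ((deg adj v)%:R^-1)
  else 0.

Fixpoint mh_walk (R : realType) (N : nat) (adj : rel 'I_N) (L : nat) (u v : 'I_N) : R :=
  match L with
  | 0 => (u == v)%:R
  | L'.+1 => \sum_w mh_step R adj u w * mh_walk R adj L' w v
  end.

Definition mixing (R : realType) (N : nat) (adj : rel 'I_N) (L : nat) : Prop :=
  forall u v : 'I_N,
    (N%:R)^-1 - (N%:R ^+ 3)^-1 <= mh_walk R adj L u v <= (N%:R)^-1 + (N%:R ^+ 3)^-1.

(* State of a round: x a = Some j iff agent a adopted option j,       *)
(* None iff it adopted nothing.                                        *)

Definition state (N M : nat) := {ffun 'I_N -> option 'I_M}.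
Definition pvecs (N M : nat) := {ffun 'I_N -> {ffun 'I_M -> bool}}.
Definition endpoints (N T : nat) := {ffun 'I_N -> {ffun 'I_T -> 'I_N}}.

Definition keep_prob (R : realType) (eps : R) : R :=
  expR (eps / 2) / (expR (eps / 2) + 1).

(* step (1): randomized response; non-adopters carry a dummy vector *)
Definition pert_w (R : realType) (N M : nat) (eps : R) (x : state N M) (y : pvecs N M) : R :=
  \prod_(a : 'I_N)
    match x a with
    | Some j0 => \prod_(j : 'I_M)
                   (if y a j == (j == j0) then keep_prob eps else 1 - keep_prob eps)
    | None => (y a == [ffun => false])%:R
    end.

(* step (2): each adopter launches T independent tokens, each ending
   according to the L-step MH walk from its launcher; non-adopters have dummy
   endpoints (and their tokens are not counted). *)
Definition tok_w (R : realType) (N M T : nat) (adj : rel 'I_N) (L : nat)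
    (x : state N M) (e : endpoints N T) : R :=
  \prod_(a : 'I_N)
    match x a with
    | Some _ => \prod_(k : 'I_T) mh_walk R adj L a (e a k)
    | None => (e a == [ffun => a])%:R
    end.

(* V_i : number of tokens (hence perturbed vectors) sampled by agent i *)
Definition sampled (N M T : nat) (x : state N M) (e : endpoints N T) (i : 'I_N) : nat :=
  (\sum_(a : 'I_N) \sum_(k : 'I_T) ((x a != None) && (e a k == i) : nat))%N.

Definition Lambda (R : realType) (N M T : nat) (x : state N M) (y : pvecs N M)
    (e : endpoints N T) (i : 'I_N) (j : 'I_M) : R :=
  (\sum_(a : 'I_N) \sum_(k : 'I_T) ((x a != None) && (e a k == i) && y a j : nat))%N%:R
    / (sampled x e i)%:R.

Definition Qtil (R : realType) (N M T : nat) (eps : R) (x : state N M) (y : pvecs N M)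
    (e : endpoints N T) (i : 'I_N) (j : 'I_M) : R :=
  let c := expR (eps / 2) in
  Num.max ((c + 1) / (c - 1) * Lambda R x y e i j - (c - 1)^-1) 0.

(* normalisation; convention: if all Qtil vanish, fall back to Q^0_j = 1/M *)
Definition Qhat (R : realType) (N M T : nat) (eps : R) (x : state N M) (y : pvecs N M)
    (e : endpoints N T) (i : 'I_N) (j : 'I_M) : R :=
  let s := \sum_(j' : 'I_M) Qtil eps x y e i j' in
  if s == 0 then (M%:R)^-1 else Qtil eps x y e i j / s.

Definition sel_p (R : realType) (N M T : nat) (eps mu : R) (x : state N M) (y : pvecs N M)
    (e : endpoints N T) (i : 'I_N) (j : 'I_M) : R :=
  (1 - mu) * Qhat eps x y e i j + mu / M%:R.

Definition phi_w (R : realType) (M : nat) (eta : 'I_M -> R) (phi : {ffun 'I_M -> bool}) : R :=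
  \prod_(j : 'I_M) (if phi j then eta j else 1 - eta j).

Definition adopt_w (R : realType) (N M : nat) (beta : R) (phi : {ffun 'I_M -> bool})
    (s : {ffun 'I_N -> 'I_M}) (x' : state N M) : R :=
  \prod_(i : 'I_N)
    match x' i with
    | Some j => (j == s i)%:R * (if phi j then beta else 1 - beta)
    | None => if phi (s i) then 1 - beta else beta
    end.

Definition kernel (R : realType) (N M T : nat) (adj : rel 'I_N) (L : nat)
    (eps mu beta : R) (eta : 'I_M -> R) (x x' : state N M) : R :=
  \sum_(y : pvecs N M) \sum_(e : endpoints N T) \sum_(phi : {ffun 'I_M -> bool})
    \sum_(s : {ffun 'I_N -> 'I_M})
      pert_w eps x y * tok_w R adj L x e * phi_w eta phi
      * (\prod_(i : 'I_N) sel_p eps mu x y e i (s i)) * adopt_w beta phi s x'.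

Fixpoint Xlaw (R : realType) (N M T : nat) (adj : rel 'I_N) (L : nat)
    (eps mu beta : R) (eta : 'I_M -> R) (r : nat) (x : state N M) : R :=
  match r with
  | 0 => (x == [ffun => None])%:R
  | r'.+1 => \sum_(x0 : state N M)
               Xlaw T adj L eps mu beta eta r' x0 * kernel T adj L eps mu beta eta x0 x
  end.

(* Pr[ lo <= V_i^r <= hi ], r >= 1: tokens of round r are launched by the
   adopters of round r-1 *)
Definition prob_V (R : realType) (N M T : nat) (adj : rel 'I_N) (L : nat)
    (eps mu beta : R) (eta : 'I_M -> R) (r : nat) (i : 'I_N) (lo hi : R) : R :=
  \sum_(x : state N M) Xlaw T adj L eps mu beta eta r.-1 x *
    \sum_(e : endpoints N T) tok_w R adj L x e * (nat_of_bool ((lo <= (sampled x e i)%:R :> R) && ((sampled x e i)%:R <= hi))%R)%:R.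

From HB Require Import structures.
From mathcomp Require Import all_boot all_order all_algebra.
From mathcomp Require Import reals sequences exp.
From mathcomp Require Import ring lra.
Set Implicit Arguments.
Unset Strict Implicit.
Unset Printing Implicit Defensive.
Import Order.TTheory GRing.Theory Num.Theory.
Local Open Scope ring_scope.

(* Conditionally on the adopters of round r-1, V_i is a sum of independent
   indicators, one per token launched by an adopter, each of mean within N^-3 of
   1/N; so by the Chernoff method both tails of V_i are at most N^-10 as soon as
   there are at least (1-beta)N/4 adopters.  Whatever happened before, each agent
   adopts with probability at least 1-beta, independently of the others, and a
   third Chernoff bound shows that fewer than (1-beta)N/4 of them adopt with
   probability at most N^-10.  All laws involved are finite products, so their
   moment generating functions factor. *)

Section FiniteDistributions.
Variable R : numDomainType.

Definition is_fdist (T : finType) (p : T -> R) : Prop :=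
  (forall x, 0 <= p x) /\ \sum_x p x = 1.

Lemma eq_is_fdist (T : finType) (p q : T -> R) : p =1 q -> is_fdist p -> is_fdist q.
Proof.
move=> pq [p0 p1]; split=> [x|]; first by rewrite -pq.
by rewrite -p1; apply: eq_bigr => x _; rewrite pq.
Qed.

Lemma fdist_le1 (T : finType) (p : T -> R) x : is_fdist p -> p x <= 1.
Proof.
case=> p0 <-; rewrite (bigD1 x) //= lerDl.
by apply: sumr_ge0 => y _.
Qed.

Lemma is_fdist_dirac (T : finType) (c : T) : is_fdist (fun x => (x == c)%:R).
Proof.
split=> [x|]; first exact: ler0n.
by rewrite (bigD1 c) //= eqxx big1 ?addr0 // => x /negbTE ->.
Qed.

Lemma is_fdist_bool (p : R) (c : bool) :
  0 <= p <= 1 -> is_fdist (fun b : bool => if b == c then p else 1 - p).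
Proof.
case/andP=> p0 p1; split=> [b|]; first by case: ifP; rewrite // subr_ge0.
by rewrite big_bool; case: c => /=; rewrite ?subrK // addrC subrK.
Qed.

Lemma is_fdist_prod (I J : finType) (w : I -> J -> R) :
  (forall i, is_fdist (w i)) -> is_fdist (fun f : {ffun I -> J} => \prod_i w i (f i)).
Proof.
move=> wd; split=> [f|]; first by apply: prodr_ge0 => i _; case: (wd i).
by rewrite -bigA_distr_bigA big1 // => i _; case: (wd i).
Qed.

Lemma is_fdist_mix (T U : finType) (p : T -> R) (q : T -> U -> R) :
  is_fdist p -> (forall x, is_fdist (q x)) -> is_fdist (fun y => \sum_x p x * q x y).
Proof.
move=> [p0 p1] qd; split=> [y|].
  by apply: sumr_ge0 => x _; apply: mulr_ge0 => //; case: (qd x).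
rewrite exchange_big /= -[RHS]p1; apply: eq_bigr => x _.
by rewrite -mulr_sumr; case: (qd x) => _ ->; rewrite mulr1.
Qed.

Lemma expect_le (T : finType) (p f : T -> R) (c : R) :
  is_fdist p -> (forall x, f x <= c) -> \sum_x p x * f x <= c.
Proof.
move=> [p0 p1] fc; apply: (@le_trans _ _ (\sum_x p x * c)).
  by apply: ler_sum => x _; exact: ler_wpM2l.
by rewrite -mulr_suml p1 mul1r.
Qed.

Lemma expect_mix_le (T U : finType) (p : T -> R) (q : T -> U -> R) (f : U -> R) (c : R) :
  is_fdist p -> (forall x, \sum_y q x y * f y <= c) ->
  \sum_y (\sum_x p x * q x y) * f y <= c.
Proof.
move=> pd qc; under eq_bigr do rewrite mulr_suml.
rewrite exchange_big /= (eq_bigr (fun x => p x * \sum_y q x y * f y)).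
  exact: expect_le.
by move=> x _; rewrite mulr_sumr; apply: eq_bigr => y _; rewrite mulrA.
Qed.

Lemma expect_lower_bound (T : finType) (p f a : T -> R) (c : R) :
  is_fdist p -> (forall x, 1 - a x - c <= f x) ->
  1 - \sum_x p x * a x - c <= \sum_x p x * f x.
Proof.
move=> [p0 p1] af; apply: (@le_trans _ _ (\sum_x p x * (1 - a x - c))).
  rewrite [leRHS](eq_bigr (fun x => p x - p x * a x - p x * c)); last by move=> x _; ring.
  by rewrite !sumrB -mulr_suml p1 mul1r.
by apply: ler_sum => x _; exact: ler_wpM2l.
Qed.

End FiniteDistributions.

Lemma sum_option (V : nmodType) (J : finType) (F : option J -> V) :
  \sum_u F u = F None + \sum_j F (Some j).
Proof.
rewrite (bigD1 None) //= (reindex_omap Some id) => [|[j|] //].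
by congr (_ + _); apply: eq_bigl => j; rewrite eqxx.
Qed.

Section ExponentialBounds.
Variable R : realType.

Lemma expect_prod_expR (I J : finType) (w : I -> J -> R) (c : I -> J -> nat) (t : R) :
  \sum_(f : {ffun I -> J}) (\prod_i w i (f i)) * expR (t * (\sum_i c i (f i))%N%:R)
  = \prod_i \sum_j w i j * expR (t * (c i j)%:R).
Proof.
rewrite bigA_distr_bigA; apply: eq_bigr => f _.
by rewrite natr_sum mulr_sumr expR_sum -big_split.
Qed.

Lemma expect_expR_indicator (T : finType) (p : T -> R) (c : T) (t : R) :
  is_fdist p -> \sum_x p x * expR (t * (x == c)%:R) = 1 + p c * (expR t - 1).
Proof.
case=> _ p1; rewrite (bigD1 c) //= eqxx mulr1.
rewrite (eq_bigr p) => [|x /negbTE ->]; last by rewrite mulr0 expR0 mulr1.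
have -> : \sum_(x | x != c) p x = 1 - p c by rewrite -p1 [in RHS](bigD1 c) //= addrAC subrr add0r.
ring.
Qed.

Lemma expR_le_inv_subr (x : R) : x < 1 -> expR x <= (1 - x)^-1.
Proof.
move=> x1; rewrite -[expR x]invrK -expRN lef_pV2 ?posrE ?expR_gt0 ?subr_gt0 //.
exact: expR_ge1Dx.
Qed.

Lemma expRN1_le : expR (-1) <= 1 / 2 :> R.
Proof.
rewrite expRN mul1r lef_pV2 ?posrE ?expR_gt0 //.
by have := expR_ge1Dx (1 : R); lra.
Qed.

Lemma expR_quarter_le : expR (1 / 4) <= 4 / 3 :> R.
Proof.
have -> : 4 / 3 = (1 - 1 / 4 : R)^-1 by field.
by apply: expR_le_inv_subr; lra.
Qed.

Lemma ln_ge1 (n : R) : 4 <= n -> 1 <= ln n.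
Proof.
move=> n4; rewrite -[1](expRK 1) ler_ln ?posrE ?expR_gt0 //; last lra.
have -> : (1 : R) = 1 / 2 + 1 / 2 by field.
rewrite expRD; have h2 := @expR_le_inv_subr (1 / 2) ltac:(lra).
have e0 := expR_gt0 (1 / 2 : R).
have e2 : (1 - 1 / 2 : R)^-1 = 2 by field.
rewrite e2 in h2.
nra.
Qed.

Lemma expR_le_invXn (a n : R) (k : nat) :
  0 < n -> a <= - (k%:R * ln n) -> expR a <= (n ^+ k)^-1.
Proof.
by move=> n0 ak; rewrite -[n ^+ k]lnK ?posrE ?exprn_gt0 // -expRN lnXn // -mulr_natl ler_expR.
Qed.

Lemma lt_indicator_le_expR (a b : R) : (nat_of_bool (a < b))%:R <= expR (b - a).
Proof.
case: ltP => ab /=; last exact: expR_ge0.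
by rewrite -expR0 ler_expR subr_ge0 ltW.
Qed.

Lemma out_of_range_le_expR (lo hi v : R) :
  1 - (nat_of_bool ((lo <= v) && (v <= hi)))%:R <= expR (lo - v) + expR ((v - hi) / 4).
Proof.
have e1 := expR_ge1Dx (lo - v); have e2 := expR_ge1Dx ((v - hi) / 4).
have e3 := expR_gt0 (lo - v); have e4 := expR_gt0 ((v - hi) / 4).
by case: (leP lo v) => h1 /=; case: (leP v hi) => h2 /=; lra.
Qed.

End ExponentialBounds.

Section MetropolisHastings.
Variables (R : realType) (N : nat) (adj : rel 'I_N).
Hypothesis adj_irr : irreflexive adj.

Lemma is_fdist_mh_step u : is_fdist (mh_step R adj u).
Proof.
pose m w : R := Num.min ((deg adj u)%:R^-1) ((deg adj w)%:R^-1).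
have m_ge0 w : 0 <= m w by rewrite le_min !invr_ge0 !ler0n.
split=> [v|].
  rewrite /mh_step; case: eqP => _; last by case: ifP => _; [exact: m_ge0 | ].
  rewrite subr_ge0 -/(m _); apply: (@le_trans _ _ (\sum_(w | adj u w) (deg adj u)%:R^-1)).
    by apply: ler_sum => w _; rewrite ge_min lexx.
  rewrite sumr_const /deg cardsE; case: #|_| => [|k]; first by rewrite mulr0n.
  by rewrite -[_^-1 *+ _]mulr_natr mulVf ?pnatr_eq0.
rewrite (bigD1 u) //= /mh_step eqxx -/(m _).
rewrite (eq_bigr (fun w => if adj u w then m w else 0)) => [|w wu].
  rewrite -big_mkcondr /= [X in _ + X](eq_bigl (adj u)) ?subrK // => w.
  by case: eqVneq => // ->; rewrite adj_irr.
by rewrite eq_sym (negbTE wu).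
Qed.

Lemma is_fdist_mh_walk L u : is_fdist (mh_walk R adj L u).
Proof.
elim: L u => [|L IH] u /=; last exact: is_fdist_mix (is_fdist_mh_step u) IH.
by apply: eq_is_fdist _ (is_fdist_dirac R u) => v; rewrite /= eq_sym.
Qed.

End MetropolisHastings.

Section SampledTokens.
Variables (R : realType) (N M T : nat) (adj : rel 'I_N) (L : nat).
Hypothesis adj_irr : irreflexive adj.

Lemma is_fdist_tok (x : state N M) : is_fdist (fun e : endpoints N T => tok_w R adj L x e).
Proof.
apply: (is_fdist_prod (w := fun a (ea : {ffun 'I_T -> 'I_N}) => match x a with
    | Some _ => \prod_k mh_walk R adj L a (ea k)
    | None => (ea == [ffun => a])%:R end)) => a.
case: (x a) => [_|]; last exact: is_fdist_dirac.
exact: is_fdist_prod (fun _ => is_fdist_mh_walk R adj_irr L a).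
Qed.

Definition sampled_mean (x : state N M) (i : 'I_N) : R :=
  T%:R * \sum_(a | x a != None) mh_walk R adj L a i.

Lemma tok_mgf (x : state N M) i t :
  \sum_(e : endpoints N T) tok_w R adj L x e * expR (t * (sampled x e i)%:R) =
  \prod_(a | x a != None) (1 + mh_walk R adj L a i * (expR t - 1)) ^+ T.
Proof.
rewrite /tok_w /sampled (expect_prod_expR (fun a (ea : {ffun 'I_T -> 'I_N}) =>
    match x a with
    | Some _ => \prod_k mh_walk R adj L a (ea k)
    | None => (ea == [ffun => a])%:R end)
  (fun a (ea : {ffun 'I_T -> 'I_N}) => (\sum_k ((x a != None) && (ea k == i)) : nat)%N)).
rewrite [RHS]big_mkcond; apply: eq_bigr => a _; case: (x a) => [_|] /=.
  rewrite (expect_prod_expR (fun _ => mh_walk R adj L a) (fun _ v => (v == i) : nat)).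
  rewrite prodr_const card_ord expect_expR_indicator //.
  exact: is_fdist_mh_walk.
rewrite big1_eq mulr0 expR0; under eq_bigr do rewrite mulr1.
exact: (is_fdist_dirac R _).2.
Qed.

Lemma tok_mgf_le (x : state N M) i t :
  \sum_(e : endpoints N T) tok_w R adj L x e * expR (t * (sampled x e i)%:R) <=
  expR ((expR t - 1) * sampled_mean x i).
Proof.
have -> : (expR t - 1) * sampled_mean x i =
    \sum_(a | x a != None) T%:R * (mh_walk R adj L a i * (expR t - 1)).
  rewrite /sampled_mean mulrCA !mulr_sumr; apply: eq_bigr => a _.
  by rewrite (mulrC (expR t - 1)).
rewrite tok_mgf expR_sum; apply: ler_prod => a _.
have [p_ge0 _] := is_fdist_mh_walk R adj_irr L a.
have p_le1 := fdist_le1 i (is_fdist_mh_walk R adj_irr L a).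
have p0 := p_ge0 i; have et := expR_gt0 t.
rewrite exprn_ge0 /=; last by nra.
rewrite expRM_natl lerXn2r ?nnegrE ?expR_ge0 ?expR_ge1Dx //; nra.
Qed.

(* Chernoff bounds with parameters -1 and 1/4, using expR (-1) - 1 <= -1/2 and
   expR (1/4) - 1 <= 1/3. *)
Lemma sampled_in_range_ge (x : state N M) i (lo hi : R) :
  1 - expR (lo - sampled_mean x i / 2) - expR (sampled_mean x i / 3 - hi / 4) <=
  \sum_(e : endpoints N T) tok_w R adj L x e *
    (nat_of_bool ((lo <= (sampled x e i)%:R :> R) && ((sampled x e i)%:R <= hi)))%:R.
Proof.
set m := sampled_mean x i; pose V (e : endpoints N T) : R := (sampled x e i)%:R.
have m_ge0 : 0 <= m.
  by rewrite mulr_ge0 ?ler0n ?sumr_ge0 // => a _; case: (is_fdist_mh_walk R adj_irr L a).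
have lower : \sum_(e : endpoints N T) tok_w R adj L x e * expR (lo - V e) <= expR (lo - m / 2).
  rewrite (eq_bigr (fun e => expR lo * (tok_w R adj L x e * expR (-1 * V e)))); last first.
    by move=> e _; rewrite mulrCA -expRD mulN1r.
  rewrite -mulr_sumr; apply: le_trans (ler_wpM2l (expR_ge0 lo) (tok_mgf_le x i (-1))) _.
  by rewrite -expRD -/m ler_expR; have e1 := @expRN1_le R; nra.
have upper : \sum_(e : endpoints N T) tok_w R adj L x e * expR ((V e - hi) / 4)
    <= expR (m / 3 - hi / 4).
  rewrite (eq_bigr (fun e => expR (- hi / 4) * (tok_w R adj L x e * expR (1 / 4 * V e))));
    last by move=> e _; rewrite mulrCA -expRD; congr (_ * expR _); ring.
  rewrite -mulr_sumr; apply: le_trans (ler_wpM2l (expR_ge0 _) (tok_mgf_le x i (1 / 4))) _.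
  by rewrite -expRD -/m ler_expR; have e4 := @expR_quarter_le R; nra.
pose a e := expR (lo - V e) + expR ((V e - hi) / 4).
apply: le_trans (expect_lower_bound (a := a) (c := 0) (is_fdist_tok x) _) => [|e].
  by under eq_bigr do rewrite mulrDr; rewrite big_split /=; lra.
by have := out_of_range_le_expR lo hi (V e); rewrite /a; lra.
Qed.

End SampledTokens.

Section RoundKernel.
Variables (R : realType) (N M T : nat) (adj : rel 'I_N) (L : nat) (eps mu beta : R)
  (eta : 'I_M -> R).
Hypotheses (M_gt0 : (0 < M)%N) (mu01 : 0 <= mu <= 1) (beta01 : 0 <= beta <= 1)
  (eta01 : forall j, 0 <= eta j <= 1) (adj_irr : irreflexive adj).

Lemma keep_prob01 : 0 <= keep_prob eps <= 1.
Proof.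
rewrite /keep_prob; have e0 := expR_gt0 (eps / 2).
by rewrite divr_ge0 ?ler_pdivrMr /=; lra.
Qed.

Lemma is_fdist_pert (x : state N M) : is_fdist (pert_w eps x).
Proof.
pose k := keep_prob eps.
apply: (is_fdist_prod (w := fun a (ya : {ffun 'I_M -> bool}) => match x a with
    | Some j0 => \prod_j (if ya j == (j == j0) then k else 1 - k)
    | None => (ya == [ffun => false])%:R end)) => a.
case: (x a) => [j0|]; last exact: is_fdist_dirac.
apply: (is_fdist_prod (w := fun j b => if b == (j == j0) then k else 1 - k)) => j.
exact: is_fdist_bool keep_prob01.
Qed.

Lemma is_fdist_phi : is_fdist (phi_w eta).
Proof.
apply: (is_fdist_prod (w := fun j (b : bool) => if b then eta j else 1 - eta j)) => j.
by apply: eq_is_fdist (is_fdist_bool true (eta01 j)) => b; rewrite eqb_id.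
Qed.

Lemma is_fdist_Qhat (x : state N M) y (e : endpoints N T) i : is_fdist (Qhat eps x y e i).
Proof.
have Qtil_ge0 j : 0 <= Qtil eps x y e i j by rewrite /Qtil le_max lexx orbT.
rewrite /Qhat; case: eqP => [_|s_neq0]; split=> [j|].
- by rewrite invr_ge0 ler0n.
- by rewrite sumr_const card_ord -[_ *+ M]mulr_natr mulVf // pnatr_eq0 -lt0n.
- by rewrite divr_ge0 ?sumr_ge0.
- by rewrite -mulr_suml mulfV //; apply/eqP.
Qed.

Lemma is_fdist_sel (x : state N M) y (e : endpoints N T) i :
  is_fdist (sel_p eps mu x y e i).
Proof.
have [Q_ge0 Q_sum] := is_fdist_Qhat x y e i; have /andP[mu0 mu1] := mu01.
rewrite /sel_p; split=> [j|].
  by rewrite addr_ge0 ?mulr_ge0 ?subr_ge0 ?invr_ge0 ?ler0n ?Q_ge0.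
rewrite big_split /= -mulr_sumr Q_sum sumr_const card_ord -[_ *+ M]mulr_natr.
by rewrite -mulrA mulVf ?pnatr_eq0 -?lt0n // mulr1 mulr1 subrK.
Qed.

Lemma is_fdist_sel_prod (x : state N M) y (e : endpoints N T) :
  is_fdist (fun s : {ffun 'I_N -> 'I_M} => \prod_i sel_p eps mu x y e i (s i)).
Proof. exact: is_fdist_prod (is_fdist_sel x y e). Qed.

Lemma is_fdist_adopt phi (s : {ffun 'I_N -> 'I_M}) : is_fdist (adopt_w beta phi s).
Proof.
have /andP[b0 b1] := beta01.
apply: (is_fdist_prod (w := fun i (u : option 'I_M) => match u with
    | Some j => (j == s i)%:R * (if phi j then beta else 1 - beta)
    | None => if phi (s i) then 1 - beta else beta end)) => i.
split=> [[j|]|]; first by rewrite mulr_ge0 ?ler0n //; case: (phi j); lra.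
  by case: (phi (s i)); lra.
rewrite sum_option (bigD1 (s i)) //= eqxx mul1r big1 ?addr0 => [|j /negbTE ->].
  by case: (phi (s i)); ring.
by rewrite mul0r.
Qed.

Lemma kernelE x0 x' :
  kernel T adj L eps mu beta eta x0 x' =
  \sum_y pert_w eps x0 y * \sum_(e : endpoints N T) tok_w R adj L x0 e *
    \sum_phi phi_w eta phi *
      \sum_(s : {ffun 'I_N -> 'I_M}) (\prod_i sel_p eps mu x0 y e i (s i)) * adopt_w beta phi s x'.
Proof.
rewrite /kernel; apply: eq_bigr => y _; rewrite mulr_sumr; apply: eq_bigr => e _.
rewrite !mulr_sumr; apply: eq_bigr => phi _.
by rewrite !mulr_sumr; apply: eq_bigr => s _; rewrite !mulrA.
Qed.

Lemma is_fdist_kernel x0 : is_fdist (kernel T adj L eps mu beta eta x0).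
Proof.
apply: eq_is_fdist (fun x' => esym (kernelE x0 x')) _.
apply: is_fdist_mix (is_fdist_pert x0) _ => y.
apply: is_fdist_mix (is_fdist_tok R T L adj_irr x0) _ => e.
apply: is_fdist_mix is_fdist_phi _ => phi.
exact: is_fdist_mix (is_fdist_sel_prod x0 y e) (is_fdist_adopt phi).
Qed.

Lemma expect_kernel_le x0 (F : state N M -> R) (c : R) :
  (forall phi s, \sum_x' adopt_w beta phi s x' * F x' <= c) ->
  \sum_x' kernel T adj L eps mu beta eta x0 x' * F x' <= c.
Proof.
move=> Fc; under eq_bigr do rewrite kernelE.
apply: expect_mix_le (is_fdist_pert x0) _ => y.
apply: expect_mix_le (is_fdist_tok R T L adj_irr x0) _ => e.
apply: expect_mix_le is_fdist_phi _ => phi.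
exact: expect_mix_le (is_fdist_sel_prod x0 y e) (Fc phi).
Qed.

Lemma is_fdist_Xlaw r : is_fdist (Xlaw T adj L eps mu beta eta r).
Proof.
elim: r => [|r IH]; last exact: is_fdist_mix IH is_fdist_kernel.
exact: is_fdist_dirac.
Qed.

Lemma expect_Xlaw_le r (F : state N M -> R) (c : R) :
  (forall phi s, \sum_x' adopt_w beta phi s x' * F x' <= c) ->
  \sum_x Xlaw T adj L eps mu beta eta r.+1 x * F x <= c.
Proof.
by move=> Fc; apply: expect_mix_le (is_fdist_Xlaw r) _ => x0; apply: expect_kernel_le.
Qed.

End RoundKernel.

Definition num_adopters (N M : nat) (x : state N M) : nat :=
  (\sum_a (x a != None : nat))%N.

Section AdoptionTail.
Variables (R : realType) (N M : nat) (beta : R).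
Variables (phi : {ffun 'I_M -> bool}) (s : {ffun 'I_N -> 'I_M}).
Hypothesis beta_ge_half : 1 / 2 <= beta <= 1.

Lemma adopt_mgf_le :
  \sum_(x : state N M) adopt_w beta phi s x * expR (-1 * (num_adopters x)%:R)
  <= expR (- ((1 - beta) / 2)) ^+ N.
Proof.
have /andP[b0 b1] := beta_ge_half.
rewrite /adopt_w /num_adopters (expect_prod_expR (fun i (u : option 'I_M) => match u with
    | Some j => (j == s i)%:R * (if phi j then beta else 1 - beta)
    | None => if phi (s i) then 1 - beta else beta end)
  (fun _ (u : option 'I_M) => (u != None) : nat)).
rewrite -[N in _ ^+ N]card_ord -prodr_const; apply: ler_prod => i _.
rewrite sum_option /= mulr0 expR0 mulr1 (bigD1 (s i)) //= eqxx mul1r.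
rewrite big1 ?addr0 => [|j /negbTE ->]; last by rewrite !mul0r.
have e1 := @expRN1_le R; have e0 := expR_gt0 (-1 : R).
have ex := expR_ge1Dx (- ((1 - beta) / 2)).
rewrite mulr1; case: (phi (s i)); apply/andP; split; nra.
Qed.

Lemma few_adopters_le (d : R) :
  \sum_(x : state N M) adopt_w beta phi s x * (nat_of_bool ((num_adopters x)%:R < d))%:R
  <= expR (d - (1 - beta) / 2 * N%:R).
Proof.
have beta01 : 0 <= beta <= 1 by case/andP: beta_ge_half => b0 b1; apply/andP; split; lra.
have [adopt_ge0 _] := is_fdist_adopt beta01 phi s.
apply: (@le_trans _ _ (\sum_x adopt_w beta phi s x * (expR d * expR (-1 * (num_adopters x)%:R)))).
  apply: ler_sum => x _; rewrite ler_wpM2l // -expRD mulN1r.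
  exact: lt_indicator_le_expR.
under eq_bigr do rewrite mulrCA.
rewrite -mulr_sumr expRD ler_wpM2l ?expR_ge0 // -mulNr expRM_natr.
exact: adopt_mgf_le.
Qed.

End AdoptionTail.

Section SampledCountBound.
Variables (R : realType) (N M T : nat) (adj : rel 'I_N) (L : nat) (eps mu beta : R)
  (eta : 'I_M -> R) (i : 'I_N) (lo hi d pmin pmax delta : R).
Hypotheses (M_gt0 : (0 < M)%N) (mu01 : 0 <= mu <= 1) (beta_ge_half : 1 / 2 <= beta <= 1)
  (eta01 : forall j, 0 <= eta j <= 1) (adj_irr : irreflexive adj)
  (walk_bounds : forall a b, pmin <= mh_walk R adj L a b <= pmax) (pmin_ge0 : 0 <= pmin).
Hypotheses (few_adopters_small : expR (d - (1 - beta) / 2 * N%:R) <= delta)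
  (lower_tail_small : expR (lo - d * T%:R * pmin / 2) <= delta)
  (upper_tail_small : expR (N%:R * T%:R * pmax / 3 - hi / 4) <= delta).

Lemma sampled_mean_ge (x : state N M) :
  (num_adopters x)%:R * T%:R * pmin <= sampled_mean R T adj L x i.
Proof.
rewrite /sampled_mean mulrAC mulrC ler_wpM2l ?ler0n //.
rewrite /num_adopters natr_sum mulr_suml [leRHS]big_mkcond /=.
apply: ler_sum => a _; case: (x a) => [_|] /=; last by rewrite mul0r.
by rewrite mul1r; case/andP: (walk_bounds a i).
Qed.

Lemma sampled_mean_le (x : state N M) : sampled_mean R T adj L x i <= N%:R * T%:R * pmax.
Proof.
rewrite /sampled_mean [leRHS]mulrAC [leRHS]mulrC ler_wpM2l ?ler0n //.
apply: (@le_trans _ _ (\sum_(a < N) pmax)); last by rewrite sumr_const card_ord mulr_natl.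
rewrite big_mkcond /=; apply: ler_sum => a _; have /andP[p0 p1] := walk_bounds a i.
by case: (x a) => [_|] /=; last exact: le_trans pmin_ge0 (le_trans p0 p1).
Qed.

Lemma in_range_given_adopters (x : state N M) :
  1 - (nat_of_bool ((num_adopters x)%:R < d))%:R - 2 * delta <=
  \sum_(e : endpoints N T) tok_w R adj L x e *
    (nat_of_bool ((lo <= (sampled x e i)%:R :> R) && ((sampled x e i)%:R <= hi)))%:R.
Proof.
have delta_ge0 : 0 <= delta := le_trans (expR_ge0 _) few_adopters_small.
case: ltP => [_|d_le] /=.
  have [tok_ge0 _] := is_fdist_tok R T L adj_irr x.
  apply: (@le_trans _ _ 0); first lra.
  by apply: sumr_ge0 => e _; rewrite mulr_ge0.
apply: le_trans (sampled_in_range_ge T L adj_irr x i lo hi).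
have m_ge := sampled_mean_ge x; have m_le := sampled_mean_le x.
have dTp : d * T%:R * pmin <= (num_adopters x)%:R * T%:R * pmin.
  by rewrite ler_wpM2r // ler_wpM2r ?ler0n.
have : expR (lo - sampled_mean R T adj L x i / 2) <= delta.
  by apply: le_trans lower_tail_small; rewrite ler_expR; lra.
have : expR (sampled_mean R T adj L x i / 3 - hi / 4) <= delta.
  by apply: le_trans upper_tail_small; rewrite ler_expR; lra.
lra.
Qed.

Lemma sampled_in_range_prob r : (2 <= r)%N ->
  1 - 3 * delta <= prob_V T adj L eps mu beta eta r i lo hi.
Proof.
have beta01 : 0 <= beta <= 1 by case/andP: beta_ge_half => b0 b1; lra.
case: r => [|[|r]] // _.
have few_adopters := le_trans (expect_Xlaw_le T L eps M_gt0 mu01 beta01 eta01 adj_irr r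
  (fun phi s => few_adopters_le phi s beta_ge_half d)) few_adopters_small.
apply: le_trans (expect_lower_bound (c := 2 * delta)
  (is_fdist_Xlaw T L eps M_gt0 mu01 beta01 eta01 adj_irr r.+1) in_range_given_adopters).
have -> : 1 - 3 * delta = 1 - delta - 2 * delta by ring.
by rewrite lerD2r lerD2l lerN2.
Qed.

End SampledCountBound.

Section Asymptotics.
Variable R : realType.

Lemma few_adopters_exponent (beta n G : R) :
  4 <= n -> 4 * ln n < G -> G < (1 - beta) / 40 * n ->
  (1 - beta) / 4 * n - (1 - beta) / 2 * n <= - (10 * ln n).
Proof. by move=> n4 G_gt G_lt; have := ln_ge1 n4; lra. Qed.

Lemma inv_le_quarter (n : R) : 4 <= n -> 0 < n^-1 <= 1 / 4.
Proof.
move=> n4; rewrite invr_gt0 mul1r invf_ple ?posrE ?invrK ?invr_gt0; lra.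
Qed.

Lemma mixing_lower_ge0 (n : R) : 1 <= n -> 0 <= n^-1 - (n ^+ 3)^-1.
Proof.
move=> n1; have u1 : n^-1 <= 1 by rewrite invf_le1 //; lra.
by rewrite -exprVn subr_ge0 exprS ler_piMr ?exprn_ile1 ?invr_ge0 //; lra.
Qed.

Lemma lower_tail_exponent (beta sigma h n G T : R) :
  beta < 1 -> 11 <= sigma -> h * (1 - beta) = 16 * sigma -> 4 <= n -> 4 * ln n < G ->
  h * G <= T ->
  3 * (1 - beta) / 32 * h * G - (1 - beta) / 4 * n * T * (n^-1 - (n ^+ 3)^-1) / 2
  <= - (10 * ln n).
Proof.
move=> b1 sigma11 h_def n4 G_gt T_ge; have ln1 := ln_ge1 n4.
have /andP[u0 u4] := inv_le_quarter n4.
have sG : 11 * G <= sigma * G by rewrite ler_wpM2r //; lra.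
have X_ge : 16 * sigma * G <= (1 - beta) * T.
  have -> : 16 * sigma * G = (1 - beta) * (h * G) by rewrite -h_def; ring.
  by rewrite ler_wpM2l //; lra.
have u2 : n^-1 ^+ 2 <= 1 / 16 by rewrite expr2; nra.
have T_u2 : (1 - beta) * T * (15 / 16) <= (1 - beta) * T * (1 - n^-1 ^+ 2).
  by rewrite ler_wpM2l //; lra.
have -> : (1 - beta) / 4 * n * T * (n^-1 - (n ^+ 3)^-1) / 2 =
    (1 - beta) * T * (1 - n^-1 ^+ 2) / 8 by field; lra.
have -> : 3 * (1 - beta) / 32 * h * G = 3 / 32 * (h * (1 - beta)) * G by ring.
rewrite h_def; lra.
Qed.

Lemma upper_tail_exponent (beta sigma h n G T : R) :
  1 / 2 < beta < 1 -> 11 <= sigma -> h * (1 - beta) = 16 * sigma -> 4 <= n -> 4 * ln n < G ->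
  0 <= T < h * G + 1 ->
  n * T * (n^-1 + (n ^+ 3)^-1) / 3 - 15 / 8 * h * G / 4 <= - (10 * ln n).
Proof.
move=> /andP[b0 b1] sigma11 h_def n4 G_gt /andP[T0 T_lt]; have ln1 := ln_ge1 n4.
have /andP[u0 u4] := inv_le_quarter n4.
have h_gt0 : 0 < h by rewrite -(pmulr_lgt0 _ (_ : 0 < 1 - beta)) ?h_def; lra.
have hG : 352 * G <= h * G by rewrite ler_wpM2r; nra.
have Tu2 : T * n^-1 ^+ 2 <= T / 16 by rewrite ler_wpM2l // expr2; nra.
have -> : n * T * (n^-1 + (n ^+ 3)^-1) / 3 = T * (1 + n^-1 ^+ 2) / 3 by field; lra.
lra.
Qed.

End Asymptotics.

Theorem lemma6 (R : realType) (M : nat) (eps mu beta sigma : R)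
    (eta : 'I_M -> R) (g : nat -> R) :
  (0 < M)%N -> 0 < eps -> 0 < mu < 1 -> 1 / 2 < beta < 1 -> 11 <= sigma ->
  (forall j, 0 <= eta j <= 1) ->
  (forall l : R, 0 < l -> exists N0 : nat, forall N : nat, (N0 <= N)%N ->
       l * ln (N%:R : R) < g N) ->
  (forall l : R, 0 < l -> exists N0 : nat, forall N : nat, (N0 <= N)%N ->
       g N < l * N%:R) ->
  let h := 16 * sigma / (1 - beta) in
  exists N0 : nat, forall N : nat, (N0 <= N)%N -> 4 * ln (N%:R : R) <= N%:R ->
  forall adj : rel 'I_N, symmetric adj -> irreflexive adj ->
    graph_connected adj -> ~ bipartite adj ->
  forall L : nat, mixing R adj L ->
  forall T : nat, h * g N <= T%:R < h * g N + 1 ->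
  forall (i : 'I_N) (r : nat), (2 <= r)%N ->
    prob_V T adj L eps mu beta eta r i
      (3 * (1 - beta) / 32 * h * g N) (15 / 8 * h * g N)
    >= 1 - (6 * M + 3)%:R / (N%:R ^+ 10).
Proof.
move=> M_gt0 _ /andP[mu0 mu1] beta_range sigma11 eta01 g_gt_log g_lt_lin h.
have /andP[b0 b1] := beta_range.
have mu01 : 0 <= mu <= 1 by apply/andP; split; lra.
have beta_ge_half : 1 / 2 <= beta <= 1 by apply/andP; split; lra.
have h_def : h * (1 - beta) = 16 * sigma by rewrite /h; field; lra.
have [N1 g_gt] := g_gt_log 4 ltac:(lra).
have [N2 g_lt] := g_lt_lin ((1 - beta) / 40) ltac:(lra).
exists (maxn 4 (maxn N1 N2)) => N; rewrite !geq_max => /and3P[N_ge4 /g_gt G_gt /g_lt G_lt] _.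
move=> adj _ adj_irr _ _ L mix T /andP[T_ge T_lt] i r r_ge2.
have n4 : 4 <= N%:R :> R by rewrite (ler_nat R 4).
have n_gt0 : 0 < N%:R :> R by lra.
have n_ge1 : 1 <= N%:R :> R by lra.
have T_range : (0 : R) <= T%:R < h * g N + 1 by rewrite ler0n.
apply: le_trans (sampled_in_range_prob (d := (1 - beta) / 4 * N%:R) eps i M_gt0 mu01
  beta_ge_half eta01 adj_irr mix (mixing_lower_ge0 n_ge1)
  (expR_le_invXn n_gt0 (few_adopters_exponent n4 G_gt G_lt))
  (expR_le_invXn n_gt0 (lower_tail_exponent b1 sigma11 h_def n4 G_gt T_ge))
  (expR_le_invXn n_gt0 (upper_tail_exponent beta_range sigma11 h_def n4 G_gt T_range))
  r_ge2).
rewrite lerD2l lerN2; apply: ler_wpM2r; first by rewrite invr_ge0 exprn_ge0 // ltW.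
by rewrite (ler_nat R 3) leq_addl.
Qed.
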